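(* For all $\varepsilon>0$ and $\delta\in[0,1)$, if $P$ and $Q$ are $(\varepsilon,\delta)$-indistinguishable probability distributions, then \[ B(P,Q)\le \ln\Big(\frac{e^{\varepsilon/2}+e^{-\varepsilon/2}}{2}\Big)+\ln\Big(\frac1{1-\delta}\Big)\le\min\Big\{\frac{\varepsilon^2}{8},\frac{\varepsilon}{2}\Big\}+\frac{\delta}{1-\delta}. \]
   Context: Distributions $P,Q$ (on a common space) are $(\varepsilon,\delta)$-indistinguishable if for every event $Y$, $P(Y)\le e^\varepsilon Q(Y)+\delta$ and $Q(Y)\le e^\varepsilon P(Y)+\delta$. The Bhattacharyya coefficient is $\mathrm{BC}(P\|Q)=\int\sqrt{P(x)Q(x)}\,dx$ (densities w.r.t. a common dominating measure) and the Bhattacharyya distance is $B(P,Q)=-\ln\mathrm{BC}(P\|Q)$. *)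

From HB Require Import structures.
From mathcomp Require Import all_boot all_order all_algebra.
From mathcomp Require Import all_classical all_reals all_analysis.
Set Implicit Arguments. Unset Strict Implicit. Unset Printing Implicit Defensive.
Import Order.TTheory GRing.Theory Num.Theory.
Local Open Scope classical_set_scope.
Local Open Scope ring_scope.

Definition indist (d : measure_display) (T : measurableType d) (R : realType)
  (P Q : probability T R) (eps delta : R) : Prop :=
  forall Y : set T, measurable Y ->
    (P Y <= (expR eps)%:E * Q Y + delta%:E)%E /\
    (Q Y <= (expR eps)%:E * P Y + delta%:E)%E.

Definition is_density (d : measure_display) (T : measurableType d) (R : realType)
  (mu : {measure set T -> \bar R}) (P : probability T R) (f : T -> R) : Prop :=
  measurable_fun setT f /\ (forall x, 0 <= f x) /\
  forall A : set T, measurable A -> P A = (\int[mu]_(x in A) (f x)%:E)%E.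

Definition BC (d : measure_display) (T : measurableType d) (R : realType)
  (mu : {measure set T -> \bar R}) (p q : T -> R) : \bar R :=
  (\int[mu]_x (Num.sqrt (p x * q x))%:E)%E.

Definition Bdist (d : measure_display) (T : measurableType d) (R : realType)
  (mu : {measure set T -> \bar R}) (p q : T -> R) : \bar R :=
  match BC mu p q with
  | EFin r => if 0 < r then (- ln r)%:E else +oo%E
  | +oo%E => -oo%E (* -ln(+oo); unreachable since BC <= 1 *)
  | -oo%E => +oo%E
  end.

From HB Require Import structures.
From mathcomp Require Import all_boot all_order all_algebra.
From mathcomp Require Import all_classical all_reals all_analysis.
From mathcomp Require Import lra ring.
Import Order.TTheory GRing.Theory Num.Theory.
Import numFieldNormedType.Exports.
Import measurable_realfun.
Local Open Scope classical_set_scope.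
Local Open Scope ring_scope.

(* For s = exp(eps/2), splitting T at {s^2 q < p} and using indistinguishability
   on that set gives \int min(p, s^2 q) >= 1 - delta, and symmetrically.  Since
   s (min(a, s^2 b) + min(b, s^2 a)) <= (s^2 + 1) sqrt(ab) pointwise, integration
   yields BC >= (1 - delta) / cosh(eps/2).  The closing numeric bounds are
   cosh t <= exp(t^2/2) (the derivative of 1 - cosh t exp(-t^2/2) has the sign of
   t - tanh t), cosh t <= exp t and ln(1 + x) <= x. *)

Section HyperbolicBounds.
Context {R : realType}.
Implicit Types t x : R.

Lemma ger0_derive_le0 {f df : R -> R} :
  (forall x, is_derive x 1 f (df x)) -> (forall x, 0 < x -> 0 <= df x) ->
  forall {t}, 0 <= t -> f 0 <= f t.
Proof.
move=> f_df df_ge0 t t_ge0.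
have f_cont x : {for x, continuous f}.
  have f_dx := f_df x.
  by apply/differentiable_continuous/derivable1_diffP; exact: ex_derive.
apply: (@ger0_derive1_ndecry R f 0) => //; last exact: continuous_subspaceT.
move=> x; rewrite in_itv /= andbT => x_gt0.
have f_dx := f_df x.
by rewrite derive1E derive_val; exact: df_ge0.
Qed.

Lemma sinh_le_mul_cosh t : 0 <= t ->
  expR t - expR (- t) <= t * (expR t + expR (- t)).
Proof.
move=> t_ge0.
pose k x := x * (expR x + expR (- x)) - (expR x - expR (- x)).
have dk x : is_derive x 1 k (x * (expR x - expR (- x))).
  by apply: is_derive_eq; rewrite /GRing.scale /=; ring.
have dk_ge0 x : 0 < x -> 0 <= x * (expR x - expR (- x)).
  by move=> x_gt0; rewrite mulr_ge0 ?subr_ge0 ?ler_expR; lra.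
have := ger0_derive_le0 dk dk_ge0 t_ge0.
by rewrite /k oppr0 expR0 mul0r subrr subr0 subr_ge0.
Qed.

Lemma cosh_le_expR_halfsqr t : expR t + expR (- t) <= 2 * expR (t ^+ 2 / 2).
Proof.
wlog t_ge0 : t / 0 <= t.
  move=> H; have [/H//|t_lt0] := leP 0 t.
  by have := H (- t); rewrite opprK sqrrN addrC; apply; lra.
pose g x := 2 - (expR x + expR (- x)) * expR (- (x ^+ 2 / 2)).
have dg x : is_derive x 1 g
    (expR (- (x ^+ 2 / 2)) * (x * (expR x + expR (- x)) - (expR x - expR (- x)))).
  by apply: is_derive_eq; rewrite /GRing.scale /=; field.
have dg_ge0 x : 0 < x -> 0 <= expR (- (x ^+ 2 / 2)) *
    (x * (expR x + expR (- x)) - (expR x - expR (- x))).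
  by move=> x_gt0; rewrite mulr_ge0 ?expR_ge0 // subr_ge0 sinh_le_mul_cosh // ltW.
have := ger0_derive_le0 dg dg_ge0 t_ge0.
rewrite /g oppr0 expR0 expr0n /= mul0r oppr0 expR0 mulr1 subrr subr_ge0.
by rewrite [expR (- (_ / _))]expRN ler_pdivrMr ?expR_gt0.
Qed.

Lemma ln_cosh_le t : 0 <= t ->
  ln ((expR t + expR (- t)) / 2) <= Num.min (t ^+ 2 / 2) t.
Proof.
move=> t_ge0; have cosh_gt0 : 0 < (expR t + expR (- t)) / 2.
  by rewrite divr_gt0 // addr_gt0 ?expR_gt0.
rewrite le_min; apply/andP; split.
  rewrite -[X in _ <= X]expRK ler_ln ?posrE ?expR_gt0 // ler_pdivrMr //.
  by rewrite mulrC cosh_le_expR_halfsqr.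
have expRN_le : expR (- t) <= expR t by rewrite ler_expR; lra.
by rewrite -[X in _ <= X]expRK ler_ln ?posrE ?expR_gt0 // ler_pdivrMr //; lra.
Qed.

Lemma ln_inv1B_le x : x < 1 -> ln (1 / (1 - x)) <= x / (1 - x).
Proof.
move=> x_lt1; have -> : 1 / (1 - x) = 1 + x / (1 - x) by field; lra.
apply: le_ln1Dx.
have -> : x / (1 - x) = 1 / (1 - x) - 1 by field; lra.
have : 0 < 1 / (1 - x) by rewrite divr_gt0 // subr_gt0.
lra.
Qed.

Lemma min_add_min_le_sqrt (s a b : R) : 1 <= s -> 0 <= a -> 0 <= b ->
  s * (Num.min a (s ^+ 2 * b) + Num.min b (s ^+ 2 * a))
    <= (s ^+ 2 + 1) * Num.sqrt (a * b).
Proof.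
move=> s_ge1 a_ge0 b_ge0.
have [u u_ge0 ->] : exists2 u : R, 0 <= u & a = u ^+ 2.
  by exists (Num.sqrt a); rewrite ?sqrtr_ge0 ?sqr_sqrtr.
have [v v_ge0 ->] : exists2 v : R, 0 <= v & b = v ^+ 2.
  by exists (Num.sqrt b); rewrite ?sqrtr_ge0 ?sqr_sqrtr.
rewrite -[u ^+ 2 * v ^+ 2]exprMn sqrtr_sqr ger0_norm ?mulr_ge0 //.
wlog vu : u v u_ge0 v_ge0 / v <= u.
  move=> H; have [/H|/ltW vu] := leP v u; first exact.
  by rewrite addrC [u * v]mulrC; exact: H.
have s2_ge1 : 1 <= s ^+ 2 by nra.
have min2_le : Num.min (v ^+ 2) (s ^+ 2 * u ^+ 2) <= v ^+ 2 by rewrite ge_min lexx.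
have [u_le|u_gt] := leP (u ^+ 2) (s ^+ 2 * v ^+ 2).
  (* (s^2+1) u v - s (u^2 + v^2) = (s u - v) (s v - u) *)
  have min1_le : Num.min (u ^+ 2) (s ^+ 2 * v ^+ 2) <= u ^+ 2 by rewrite ge_min lexx.
  have sv_ge_u : u <= s * v.
    by rewrite -(@ler_pXn2r _ 2) ?nnegrE ?mulr_ge0 //; [rewrite exprMn | lra].
  have su_ge_v : v <= s * u by nra.
  have : 0 <= (s * u - v) * (s * v - u) by rewrite mulr_ge0 // subr_ge0.
  by nra.
have min1_le : Num.min (u ^+ 2) (s ^+ 2 * v ^+ 2) <= s ^+ 2 * v ^+ 2.
  by rewrite ge_min lexx orbT.
have sv_le_u : s * v <= u.
  by rewrite -(@ler_pXn2r _ 2) ?nnegrE ?mulr_ge0 //; [rewrite exprMn ltW | lra].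
have : s * v * ((s ^+ 2 + 1) * v) <= u * ((s ^+ 2 + 1) * v).
  by rewrite ler_wpM2r // mulr_ge0 //; lra.
by nra.
Qed.

End HyperbolicBounds.

Section DensityBounds.
Context {R : realType} {d : measure_display} {T : measurableType d}.
Context {mu : {measure set T -> \bar R}}.

Lemma measurable_min_scale (f g : T -> R) (k : R) :
  measurable_fun setT f -> measurable_fun setT g ->
  measurable_fun setT (fun x => Num.min (f x) (k * g x)).
Proof.
by move=> mf mg; apply: measurable_minr => //; exact: measurable_funM.
Qed.

Lemma integral_min_density_ge {P Q : probability T R} {p q : T -> R} {k delta : R} :
  0 <= k -> is_density mu P p -> is_density mu Q q ->
  (forall Y, measurable Y -> (P Y <= k%:E * Q Y + delta%:E)%E) ->
  ((1 - delta)%:E <= \int[mu]_x (Num.min (p x) (k * q x))%:E)%E.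
Proof.
move=> k_ge0 [mp [p_ge0 Pp]] [mq [q_ge0 Qq]] PQ.
pose A := [set x | ((k * q x)%:E < (p x)%:E)%E].
have mA : measurable A.
  rewrite -[A]setTI; apply: measurable_lte => //; apply/measurable_EFinP => //.
  exact: measurable_funM.
have mAC : measurable (~` A) by exact: measurableC.
have min_ge0 x : (0 <= (Num.min (p x) (k * q x))%:E)%E.
  by rewrite lee_fin le_min p_ge0 mulr_ge0.
have mmin : measurable_fun (A `|` ~` A) (fun x => (Num.min (p x) (k * q x))%:E).
  by rewrite setUv; apply/measurable_EFinP; exact: measurable_min_scale.
rewrite -(setUv A) ge0_integral_setU //; last exact/disj_setPRL.
have -> : (\int[mu]_(x in A) (Num.min (p x) (k * q x))%:E = k%:E * Q A)%E.
  rewrite Qq // -ge0_integralZl_EFin //; last first.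
  - by apply/measurable_EFinP; exact: measurable_funS mq.
  - by move=> x _; rewrite lee_fin.
  by apply: eq_integral => x; rewrite inE /A /= lte_fin -EFinM => /ltW/min_idPr ->.
have -> : (\int[mu]_(x in ~` A) (Num.min (p x) (k * q x))%:E = P (~` A))%E.
  rewrite Pp //; apply: eq_integral => x.
  by rewrite inE /A /= lte_fin => /negP; rewrite -leNgt => /min_idPl ->.
rewrite probability_setC //.
have := PQ A mA.
rewrite -(fineK (fin_num_measure P _ mA)) -(fineK (fin_num_measure Q _ mA)).
by rewrite -!EFinM -!EFinB -!EFinD !lee_fin; lra.
Qed.

Lemma BC_ge_indist {P Q : probability T R} {p q : T -> R} {eps delta : R} :
  0 <= eps -> is_density mu P p -> is_density mu Q q -> indist P Q eps delta ->
  (((1 - delta) / ((expR (eps / 2) + expR (- (eps / 2))) / 2))%:E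
     <= BC mu p q)%E.
Proof.
move=> eps_ge0 dP dQ PQ.
have I1 := integral_min_density_ge (expR_ge0 eps) dP dQ (fun Y mY => (PQ Y mY).1).
have I2 := integral_min_density_ge (expR_ge0 eps) dQ dP (fun Y mY => (PQ Y mY).2).
case: dP dQ => [mp [p_ge0 _]] [mq [q_ge0 _]].
rewrite expRN; set s := expR (eps / 2).
have s2 : expR eps = s ^+ 2 by rewrite -expRM_natr; congr expR; field.
rewrite {}s2 in I1 I2.
have s_ge1 : 1 <= s by rewrite -expR0 ler_expR divr_ge0.
pose m x := Num.min (p x) (s ^+ 2 * q x) + Num.min (q x) (s ^+ 2 * p x).
have mm : measurable_fun setT m by apply: measurable_funD; exact: measurable_min_scale.
have m_ge0 x : 0 <= m x by rewrite addr_ge0 // le_min ?p_ge0 ?q_ge0 mulr_ge0 ?sqr_ge0.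
have s_gt0 : 0 < s by lra.
have s2D1_gt0 : 0 < s ^+ 2 + 1 by nra.
have c_gt0 : 0 < s / (s ^+ 2 + 1) by rewrite divr_gt0.
have int_m : (((1 - delta) + (1 - delta))%:E <= \int[mu]_x (m x)%:E)%E.
  rewrite (eq_integral (fun x => (Num.min (p x) (s ^+ 2 * q x))%:E
                                  + (Num.min (q x) (s ^+ 2 * p x))%:E)%E) //.
  rewrite ge0_integralD //; last 4 first.
  - by move=> x _; rewrite lee_fin le_min p_ge0 mulr_ge0 ?sqr_ge0.
  - by apply/measurable_EFinP; exact: measurable_min_scale.
  - by move=> x _; rewrite lee_fin le_min q_ge0 mulr_ge0 ?sqr_ge0.
  - by apply/measurable_EFinP; exact: measurable_min_scale.
  by rewrite EFinD; exact: leeD.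
have -> : ((1 - delta) / ((s + s^-1) / 2))%:E
          = ((s / (s ^+ 2 + 1))%:E * ((1 - delta) + (1 - delta))%:E)%E.
  by rewrite -EFinM; congr EFin; field; rewrite !gt_eqF.
apply: le_trans (lee_wpmul2l _ int_m) _; first by rewrite lee_fin ltW.
rewrite -ge0_integralZl_EFin //; last 3 first.
- by move=> x _; rewrite lee_fin.
- exact/measurable_EFinP.
- exact: ltW.
under eq_integral do rewrite -EFinM.
apply: ge0_le_integral => //.
- by move=> x _; rewrite lee_fin mulr_ge0 // ltW.
- by apply/measurable_EFinP; apply: measurable_funM.
- apply/measurable_EFinP.
  apply: measurableT_comp (continuous_measurable_fun (@sqrt_continuous R)) _.
  exact: measurable_funM.
move=> x _; rewrite lee_fin mulrAC ler_pdivrMr; last lra.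
by rewrite [X in _ <= X]mulrC min_add_min_le_sqrt.
Qed.

Lemma Bdist_le_ln {p q : T -> R} {r : R} : 0 < r ->
  (r%:E <= BC mu p q)%E -> (Bdist mu p q <= (- ln r)%:E)%E.
Proof.
rewrite /Bdist => r_gt0; case: (BC mu p q) => [c| |] //; last by rewrite leNye.
rewrite lee_fin => rc; rewrite (lt_le_trans r_gt0 rc) lee_fin lerN2.
by rewrite ler_ln ?posrE // (lt_le_trans r_gt0 rc).
Qed.

End DensityBounds.

Theorem lemma5p3 (R : realType) (d : measure_display) (T : measurableType d)
  (mu : {measure set T -> \bar R}) (P Q : probability T R) (p q : T -> R)
  (eps delta : R) :
  0 < eps -> 0 <= delta -> delta < 1 ->
  is_density mu P p -> is_density mu Q q ->
  indist P Q eps delta ->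
  (Bdist mu p q <=
     (ln ((expR (eps / 2) + expR (- (eps / 2))) / 2) + ln (1 / (1 - delta)))%:E)%E
  /\
  ln ((expR (eps / 2) + expR (- (eps / 2))) / 2) + ln (1 / (1 - delta))
    <= Num.min (eps ^+ 2 / 8) (eps / 2) + delta / (1 - delta).
Proof.
move=> eps_gt0 delta_ge0 delta_lt1 dP dQ PQ.
set c := (expR (eps / 2) + expR (- (eps / 2))) / 2.
have c_gt0 : 0 < c by rewrite divr_gt0 // addr_gt0 ?expR_gt0.
have delta1_gt0 : 0 < 1 - delta by rewrite subr_gt0.
split.
  have := Bdist_le_ln (divr_gt0 delta1_gt0 c_gt0) (BC_ge_indist (ltW eps_gt0) dP dQ PQ).
  by rewrite ln_div ?posrE // opprB div1r lnV ?posrE // addrC.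
apply: lerD; last exact: ln_inv1B_le.
have /ln_cosh_le : 0 <= eps / 2 by rewrite divr_ge0 // ltW.
by rewrite (_ : (eps / 2) ^+ 2 / 2 = eps ^+ 2 / 8) //; field.
Qed.
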